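(* Let $X=(X_1,\dots,X_n)$ be a random vector in $\mathcal{X}^n$ whose distribution is exchangeable, let $T:\mathcal{X}^n\to\mathbb{R}$ be a fixed (measurable) function, and let $q$ be any probability distribution on $\mathcal{S}_n$. Define $$\bar P=\sum_{\sigma,\sigma_0\in\mathcal{S}_n}q(\sigma)\,q(\sigma_0)\,\mathbf{1}\{T(X_{\sigma\circ\sigma_0^{-1}})\ge T(X)\}.$$ Then $\mathbb{P}\{\bar P\le\alpha\}\le2\alpha$ for all $\alpha\in[0,1]$.
   Context: $\mathcal{S}_n$ denotes the set (group) of all permutations of $[n]=\{1,\dots,n\}$. For $x\in\mathcal{X}^n$ and $\sigma\in\mathcal{S}_n$, $x_\sigma:=(x_{\sigma(1)},\dots,x_{\sigma(n)})$. $X$ is exchangeable means $X\stackrel{d}{=}X_\pi$ for every fixed $\pi\in\mathcal{S}_n$. $q(\sigma)$ denotes the probability that $q$ assigns to $\sigma$. *)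

From HB Require Import structures.
From mathcomp Require Import all_boot all_order all_algebra all_fingroup.
From mathcomp Require Import all_classical all_reals all_analysis.
Unset Printing Implicit Defensive.
Import Order.TTheory GRing.Theory Num.Theory.
Local Open Scope classical_set_scope.
Local Open Scope ring_scope.

Definition permute (T : Type) (n : nat) (x : 'I_n -> T) (s : {perm 'I_n}) : 'I_n -> T :=
  fun i => x (s i).

(* Product sigma-algebra on X^n = ('I_n -> X): generated by the cylinders
   {x | x i \in B}, B measurable in X. *)
Definition cylinders (d : measure_display) (X : measurableType d) (n : nat)
  : set (set ('I_n -> X)) :=
  [set A | exists (i : 'I_n) (B : set X), measurable B /\ A = (fun x => x i) @^-1` B].

Definition prod_measurable (d : measure_display) (X : measurableType d) (n : nat)
  : set (set ('I_n -> X)) := <<s (@cylinders d X n) >>.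

Definition Pbar (R : realType) (X : Type) (n : nat) (T : ('I_n -> X) -> R)
  (q : {perm 'I_n} -> R) (x : 'I_n -> X) : R :=
  \sum_(s : {perm 'I_n}) \sum_(s0 : {perm 'I_n})
     q s * q s0 * ((T x <= T (fun i => x (s ((s0^-1)%g i))))%R : bool)%:R.

From HB Require Import structures.
From mathcomp Require Import all_boot all_order all_algebra all_fingroup.
From mathcomp Require Import all_classical all_reals all_analysis.
From mathcomp Require Import measurable_realfun ring lra.
Import Order.TTheory GRing.Theory Num.Theory.
Local Open Scope classical_set_scope.
Local Open Scope ring_scope.

(* Exchangeability makes P{Pbar(X) <= alpha} equal to the expected fraction of
   relabellings r in S_n with Pbar(X_r) <= alpha, so it suffices to bound that
   fraction by 2 alpha for fixed data x.  Put u t = T(x_t), let b be the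
   indicator of {r | Pbar(x_r) <= alpha}, k = sum_r b r, and let m be b
   convolved with q.  Then sum_g m g = k and, since of any two relabellings one
   has the smaller statistic, m(g)^2 <= 2 sum_(s,s0) q s q s0 b(s^-1 g)
   1{u(s^-1 g) <= u(s0^-1 g)}, which sums over g to 2 sum_r b r Pbar(x_r)
   <= 2 alpha k.  Cauchy-Schwarz then gives k^2 <= |S_n| sum_g m(g)^2
   <= 2 alpha |S_n| k. *)

Section SumSquares.
Context {R : realFieldType}.

Lemma sqr_sum_le_pairwise (I : finType) (f : I -> R) (c : I -> I -> R) :
  (forall i, 0 <= f i) -> (forall i j, 1 <= c i j + c j i) ->
  (\sum_i f i) ^+ 2 <= 2 * \sum_i \sum_j f i * f j * c i j.
Proof.
move=> f_ge0 c_sym_ge1.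
have -> : (\sum_i f i) ^+ 2 = \sum_i \sum_j f i * f j.
  by rewrite expr2 mulr_suml; apply: eq_bigr => i _; rewrite mulr_sumr.
have -> : 2 * \sum_i \sum_j f i * f j * c i j =
          \sum_i \sum_j f i * f j * (c i j + c j i).
  rewrite mulr2n mulrDl mul1r [X in _ + X]exchange_big /= -big_split /=.
  apply: eq_bigr => i _; rewrite -big_split /=; apply: eq_bigr => j _.
  by rewrite mulrDr [f j * f i]mulrC.
apply: ler_sum => i _; apply: ler_sum => j _.
by rewrite -[leLHS]mulr1 ler_wpM2l ?mulr_ge0.
Qed.

Lemma sqr_sum_le_card_sum_sqr (I : finType) (m : I -> R) :
  (\sum_i m i) ^+ 2 <= #|I|%:R * \sum_i m i ^+ 2.
Proof.
have : 0 <= \sum_i \sum_j (m i - m j) ^+ 2.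
  by apply: sumr_ge0 => i _; apply: sumr_ge0 => j _; exact: sqr_ge0.
set N := #|I|%:R; set S1 := \sum_i m i; set S2 := \sum_i m i ^+ 2.
have inner i : \sum_j (m i - m j) ^+ 2 = N * m i ^+ 2 + S2 - 2 * (m i * S1).
  rewrite (eq_bigr (fun j => m i ^+ 2 + m j ^+ 2 - 2 * (m i * m j))); last first.
    by move=> j _; ring.
  rewrite !big_split /= sumrN sumr_const -!mulr_sumr -[_ *+ _]mulr_natl.
  rewrite -/N -/S1 -/S2; ring.
rewrite (eq_bigr _ (fun i _ => inner i)) !big_split /= sumrN sumr_const.
rewrite -!mulr_sumr -mulr_suml -[S2 *+ _]mulr_natl -/N -/S1 -/S2 expr2.
lra.
Qed.

End SumSquares.

Section PermutationPvalue.
Context {R : realFieldType} {gT : finGroupType}.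
Variable q : gT -> R.
Hypotheses (q_ge0 : forall s, 0 <= q s) (q_sum1 : \sum_s q s = 1).

Definition conv (b : gT -> R) (g : gT) : R := \sum_s q s * b (s^-1 * g)%g.

Lemma sum_conv (b : gT -> R) : \sum_g conv b g = \sum_g b g.
Proof.
rewrite exchange_big /= -[RHS]mul1r -q_sum1 mulr_suml.
by apply: eq_bigr => s _; rewrite -mulr_sumr [in RHS](reindex_inj (mulgI s^-1)%g).
Qed.

Variable u : gT -> R.

Definition pvalue (r : gT) : R :=
  \sum_s \sum_s0 q s * q s0 * (u r <= u (s0^-1 * s * r)%g)%R%:R.

Lemma sum_mul_pvalue (b : gT -> R) :
  \sum_r b r * pvalue r =
  \sum_g \sum_s \sum_s0
    q s * q s0 * (b (s^-1 * g)%g * (u (s^-1 * g)%g <= u (s0^-1 * g)%g)%R%:R).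
Proof.
rewrite [RHS]exchange_big /=.
under eq_bigr do rewrite /pvalue mulr_sumr.
rewrite exchange_big /=; apply: eq_bigr => s _.
rewrite (reindex_inj (mulgI s^-1)%g) /=; apply: eq_bigr => g _.
rewrite mulr_sumr; apply: eq_bigr => s0 _.
by rewrite !mulgA mulgK; ring.
Qed.

Lemma sqr_conv_le (b : gT -> R) (g : gT) :
  (forall r, 0 <= b r <= 1) ->
  conv b g ^+ 2 <=
  2 * \sum_s \sum_s0
    q s * q s0 * (b (s^-1 * g)%g * (u (s^-1 * g)%g <= u (s0^-1 * g)%g)%R%:R).
Proof.
move=> b01; pose c s s0 := (u (s^-1 * g)%g <= u (s0^-1 * g)%g)%R%:R : R.
have c_ge1 s s0 : 1 <= c s s0 + c s0 s.
  by rewrite /c; case: (lerP (u (s^-1 * g)%g) (u (s0^-1 * g)%g)) => [_|/ltW ->];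
     rewrite ?addr0 ?add0r ?lerDl ?lerDr.
have f_ge0 s : 0 <= q s * b (s^-1 * g)%g.
  by have /andP[b0 _] := b01 (s^-1 * g)%g; rewrite mulr_ge0.
apply: le_trans (sqr_sum_le_pairwise _ _ _ f_ge0 c_ge1) _; rewrite ler_wpM2l //.
apply: ler_sum => s _; apply: ler_sum => s0 _.
rewrite -/(c s s0); set bs := b (s^-1 * g)%g; set bs0 := b (s0^-1 * g)%g.
have /andP[bs_ge0 _] := b01 (s^-1 * g)%g.
have /andP[bs0_ge0 bs0_le1] := b01 (s0^-1 * g)%g.
rewrite [leLHS](_ : _ = q s * q s0 * (bs * c s s0) * bs0); last by ring.
by rewrite ler_piMr // !mulr_ge0 // ler0n.
Qed.

Lemma sqr_sum_le_pvalue (b : gT -> R) :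
  (forall r, 0 <= b r <= 1) ->
  (\sum_r b r) ^+ 2 <= 2 * #|gT|%:R * \sum_r b r * pvalue r.
Proof.
move=> b01; rewrite -sum_conv sum_mul_pvalue.
apply: le_trans (sqr_sum_le_card_sum_sqr _ _) _.
rewrite [2 * _]mulrC -mulrA ler_wpM2l // mulr_sumr.
by apply: ler_sum => g _; exact: sqr_conv_le.
Qed.

Lemma card_pvalue_le (alpha : R) : 0 <= alpha ->
  \sum_r (pvalue r <= alpha)%R%:R <= 2 * alpha * #|gT|%:R.
Proof.
move=> alpha_ge0; pose b r : R := (pvalue r <= alpha)%R%:R.
rewrite -/(\sum_r b r); set k := \sum_r b r.
have b01 r : 0 <= b r <= 1.
  by rewrite /b; case: (pvalue r <= alpha)%R; rewrite ?lexx ?ler01.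
have k_ge0 : 0 <= k by apply: sumr_ge0 => r _; case/andP: (b01 r).
have weighted_le : \sum_r b r * pvalue r <= alpha * k.
  rewrite mulr_sumr; apply: ler_sum => r _; rewrite /b.
  by case: (lerP (pvalue r) alpha); rewrite ?mul1r ?mulr1 ?mul0r ?mulr0.
have : k ^+ 2 <= (2 * alpha * #|gT|%:R) * k.
  apply: le_trans (sqr_sum_le_pvalue b b01) _.
  rewrite [leRHS](_ : _ = 2 * #|gT|%:R * (alpha * k)); last by ring.
  by rewrite ler_wpM2l ?mulr_ge0.
have [->|k_neq0] := eqVneq k 0; first by rewrite !mulr_ge0.
by rewrite expr2 ler_pM2r // lt_def k_neq0.
Qed.

End PermutationPvalue.

Section ProductMeasurability.
Context {dX : measure_display} {Xs : measurableType dX} {n : nat}.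
Local Notation M := (g_sigma_algebraType (@cylinders dX Xs n)).

Lemma measurable_fun_prod {d : measure_display} {Omega : measurableType d}
    (Y : Omega -> 'I_n -> Xs) :
  (forall i, measurable_fun setT (fun w => Y w i)) ->
  measurable_fun setT (Y : Omega -> M).
Proof.
move=> mY; apply: (@measurability _ _ Omega M setT Y (@cylinders dX Xs n)) => //.
by move=> _ [_ [i [B [mB ->]]] <-]; exact: mY.
Qed.

Lemma measurable_coord (i : 'I_n) : measurable_fun setT (fun x : M => x i).
Proof.
move=> _ B mB; rewrite setTI; apply: sub_sigma_algebra.
by exists i, B.
Qed.

Lemma measurable_reindex (f : 'I_n -> 'I_n) :
  measurable_fun setT (fun x : M => (fun i => x (f i)) : M).
Proof. by apply: measurable_fun_prod => i; exact: measurable_coord. Qed.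

Context {R : realType} {T : ('I_n -> Xs) -> R}.
Hypothesis mT : forall B : set R, measurable B -> @prod_measurable dX Xs n (T @^-1` B).

Lemma measurable_Pbar (q : {perm 'I_n} -> R) :
  measurable_fun setT (@Pbar R Xs n T q : M -> R).
Proof.
have mT' : measurable_fun setT (T : M -> R).
  by move=> _ B mB; rewrite setTI; exact: mT.
apply: measurable_sum => s; apply: measurable_sum => s0.
apply: measurable_funM; first exact: measurable_cst.
(* every subset of bool is measurable *)
have mnat : measurable_fun setT (fun b : bool => b%:R : R) by [].
apply: measurableT_comp mnat _.
apply: measurable_fun_ler; first exact: mT'.
exact: measurableT_comp mT' (measurable_reindex _).
Qed.

Lemma prod_measurable_Pbar_le (q : {perm 'I_n} -> R) (alpha : R) :
  @prod_measurable dX Xs n [set x | @Pbar R Xs n T q x <= alpha].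
Proof.
have := measurable_fun_ler (measurable_Pbar q) (measurable_cst alpha).
by move=> /(_ measurableT [set true] I); rewrite setTI.
Qed.

End ProductMeasurability.

Section ExchangeableAverage.
Context {dO : measure_display} {Omega : measurableType dO}.
Context {R : realType} {P : probability Omega R}.
Context {dX : measure_display} {Xs : measurableType dX} {n : nat}.
Context {X : Omega -> 'I_n -> Xs}.
Hypothesis mX : forall i, measurable_fun setT (fun w => X w i).
Hypothesis exchX : forall (pi : {perm 'I_n}) (A : set ('I_n -> Xs)),
  @prod_measurable dX Xs n A ->
  P (X @^-1` A) = P ((fun w => @permute Xs n (X w) pi) @^-1` A).

Local Notation N := (#|{perm 'I_n}|%:R : R).

Lemma prob_le_of_orbit_count (E : set ('I_n -> Xs)) (c : R) :
  @prod_measurable dX Xs n E ->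
  (forall x, \sum_(r : {perm 'I_n}) \1_E (@permute Xs n x r) <= c * N) ->
  (P (X @^-1` E) <= c%:E)%E.
Proof.
move=> mE orbit_le.
pose Y r w := @permute Xs n (X w) r.
have mpre (Z : Omega -> 'I_n -> Xs) :
    (forall i, measurable_fun setT (fun w => Z w i)) -> measurable (Z @^-1` E).
  by move=> mZ; have := measurable_fun_prod Z mZ measurableT E mE; rewrite setTI.
have mYE r : measurable (Y r @^-1` E) by apply: mpre => i; exact: mX.
have mind r : measurable_fun setT (fun w => (\1_(Y r @^-1` E) w : R)%:E).
  by apply/measurable_EFinP; exact: measurable_indic.
have PXE_fin : P (X @^-1` E) \is a fin_num by exact/fin_num_measure/mpre.
have N_gt0 : 0 < N by rewrite ltr0n; apply/card_gt0P; exists 1%g.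
have sum_prob : (\sum_r P (Y r @^-1` E) = P (X @^-1` E) * N%:E)%E.
  rewrite (eq_bigr (fun _ => P (X @^-1` E))) => [|r _]; last first.
    by rewrite (exchX r E mE).
  by rewrite -(fineK PXE_fin) sumEFin sumr_const -EFinM mulr_natr.
have sum_integral : (\sum_r P (Y r @^-1` E) =
                     \int[P]_w (\sum_r \1_(Y r @^-1` E) w)%:E)%E.
  under eq_bigr => r _ do rewrite -(setIT (Y r @^-1` E)) -integral_indic //.
  rewrite -ge0_integral_sum //.
  by under eq_integral do rewrite sumEFin.
have : (P (X @^-1` E) * N%:E <= (c * N)%:E)%E.
  rewrite -sum_prob sum_integral -[(c * N)%:E]mule1 -(probability_setT P).
  rewrite -integral_cst //; apply: ge0_le_integral => //.
  - by move=> w _; rewrite lee_fin; apply: sumr_ge0 => r _; rewrite indicE.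
  - by apply/measurable_EFinP; apply: measurable_sum => r; exact: measurable_indic.
  - by move=> w _; rewrite lee_fin; exact: orbit_le.
by rewrite -(fineK PXE_fin) -EFinM !lee_fin ler_pM2r.
Qed.

End ExchangeableAverage.

Lemma Pbar_permute (R : realType) (Xs : Type) (n : nat)
    (T : ('I_n -> Xs) -> R) (q : {perm 'I_n} -> R) (x : 'I_n -> Xs) (r : {perm 'I_n}) :
  @Pbar R Xs n T q (@permute Xs n x r) = pvalue q (fun t => T (@permute Xs n x t)) r.
Proof.
apply: eq_bigr => s _; apply: eq_bigr => s0 _.
by congr (_ * (_ <= T _)%R%:R); apply: funext => i; rewrite /permute !permM.
Qed.

Theorem theorem8 (dO : measure_display) (Omega : measurableType dO)
  (R : realType) (P : probability Omega R)
  (dX : measure_display) (Xs : measurableType dX) (n : nat)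
  (X : Omega -> ('I_n -> Xs))
  (hXmeas : forall i : 'I_n, measurable_fun setT (fun w => X w i))
  (hexch : forall (pi : {perm 'I_n}) (A : set ('I_n -> Xs)),
      @prod_measurable dX Xs n A ->
      P (X @^-1` A) = P ((fun w => @permute Xs n (X w) pi) @^-1` A))
  (T : ('I_n -> Xs) -> R)
  (hT : forall B : set R, measurable B -> @prod_measurable dX Xs n (T @^-1` B))
  (q : {perm 'I_n} -> R)
  (hq0 : forall s, 0 <= q s)
  (hq1 : \sum_(s : {perm 'I_n}) q s = 1) :
  forall alpha : R, 0 <= alpha <= 1 ->
    (P [set w | (@Pbar R Xs n T q (X w) <= alpha)%R] <= (2 * alpha)%:E)%E.
Proof.
move=> alpha /andP[alpha_ge0 _].
have orbit_le x : \sum_(r : {perm 'I_n})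
    \1_[set y | @Pbar R Xs n T q y <= alpha] (@permute Xs n x r)
    <= 2 * alpha * #|{perm 'I_n}|%:R.
  under eq_bigr do rewrite indicE mem_setE unfold_in Pbar_permute.
  exact: card_pvalue_le.
exact: prob_le_of_orbit_count hXmeas hexch _ _
  (prod_measurable_Pbar_le hT q alpha) orbit_le.
Qed.
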